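(* The 1-generated exact Kleene algebras are, up to isomorphism, exactly $\mathbf F_{\mathsf{KA}}(z)$, $\mathbf K_4$ and $\mathbf 2_{\mathsf{KA}}$, and each of them is projective in $\mathsf{KA}$.
   Context: $\mathsf{KA}$ is the variety of Kleene algebras: algebras $(A,\wedge,\vee,\neg,0,1)$ that are bounded distributive lattices with a unary operation $\neg$ satisfying $\neg\neg x\approx x$, $x\wedge y\approx\neg(\neg x\vee\neg y)$, and $x\wedge\neg x\le y\vee\neg y$. $\mathbf F_{\mathsf{KA}}(z)$ is the free Kleene algebra on one generator $z$; it has six elements $0<z\wedge\neg z< z,\neg z< z\vee\neg z<1$ with $z,\neg z$ incomparable. $\mathbf K_4$ is the four-element Kleene chain $0<\neg x<x<1$ (with $\neg 0=1$, $\neg 1=0$, $\neg x$ and $x$ swapped by $\neg$), and $\mathbf 2_{\mathsf{KA}}$ is the two-element Boolean algebra regarded as a Kleene algebra. An algebra is exact in $\mathsf{KA}$ if it is isomorphic to a finitely generated subalgebra of a finitely generated free Kleene algebra, and projective in $\mathsf{KA}$ iff it is a retract of a free Kleene algebra (there are homomorphisms $i:\mathbf P\to\mathbf F$, $j:\mathbf F\to\mathbf P$ with $j\circ i=\mathrm{id}_{\mathbf P}$). *)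

From mathcomp Require Import all_boot.
From Stdlib Require Import List.

Set Implicit Arguments.
Unset Strict Implicit.
Unset Printing Implicit Defensive.

Record KA := {
  ka_car :> Type;
  ka_meet : ka_car -> ka_car -> ka_car;
  ka_join : ka_car -> ka_car -> ka_car;
  ka_neg : ka_car -> ka_car;
  ka_zero : ka_car;
  ka_one : ka_car;
  ka_meetC : forall x y, ka_meet x y = ka_meet y x;
  ka_joinC : forall x y, ka_join x y = ka_join y x;
  ka_meetA : forall x y z, ka_meet x (ka_meet y z) = ka_meet (ka_meet x y) z;
  ka_joinA : forall x y z, ka_join x (ka_join y z) = ka_join (ka_join x y) z;
  ka_meet_absorb : forall x y, ka_meet x (ka_join x y) = x;
  ka_join_absorb : forall x y, ka_join x (ka_meet x y) = x;
  ka_distr : forall x y z,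
      ka_meet x (ka_join y z) = ka_join (ka_meet x y) (ka_meet x z);
  ka_join0 : forall x, ka_join x ka_zero = x;
  ka_meet1 : forall x, ka_meet x ka_one = x;
  ka_negK : forall x, ka_neg (ka_neg x) = x;
  ka_deMorgan : forall x y, ka_meet x y = ka_neg (ka_join (ka_neg x) (ka_neg y));
  (* x /\ ~x <= y \/ ~y, with a <= b meaning a /\ b = a *)
  ka_kleene : forall x y,
      ka_meet (ka_meet x (ka_neg x)) (ka_join y (ka_neg y)) = ka_meet x (ka_neg x)
}.

Definition ka_hom (A B : KA) (f : A -> B) : Prop :=
  (forall x y, f (ka_meet x y) = ka_meet (f x) (f y)) /\
  (forall x y, f (ka_join x y) = ka_join (f x) (f y)) /\
  (forall x, f (ka_neg x) = ka_neg (f x)) /\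
  f (ka_zero A) = ka_zero B /\
  f (ka_one A) = ka_one B.

Definition ka_iso (A B : KA) : Prop :=
  exists f : A -> B, ka_hom f /\ bijective f.

Definition ka_free_on (X : Type) (F : KA) (g : X -> F) : Prop :=
  forall (B : KA) (h : X -> B),
    exists f : F -> B, ka_hom f /\ (forall x, f (g x) = h x) /\
      (forall f' : F -> B, ka_hom f' -> (forall x, f' (g x) = h x) ->
         forall a, f' a = f a).

Inductive ka_gen (A : KA) (S : A -> Prop) : A -> Prop :=
  | kg_base x : S x -> ka_gen S x
  | kg_meet x y : ka_gen S x -> ka_gen S y -> ka_gen S (ka_meet x y)
  | kg_join x y : ka_gen S x -> ka_gen S y -> ka_gen S (ka_join x y)
  | kg_neg x : ka_gen S x -> ka_gen S (ka_neg x)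
  | kg_zero : ka_gen S (ka_zero A)
  | kg_one : ka_gen S (ka_one A).

Definition ka_fin_generated (A : KA) : Prop :=
  exists s : list A, forall a : A, ka_gen (fun x => In x s) a.

Definition ka_one_generated (A : KA) : Prop :=
  exists z : A, forall a : A, ka_gen (fun x => x = z) a.

(** Exact: isomorphic to a finitely generated subalgebra of a finitely
    generated free Kleene algebra; equivalently A is finitely generated and
    embeds (injective homomorphism) into some free KA on finitely many
    generators. *)
Definition ka_exact (A : KA) : Prop :=
  ka_fin_generated A /\
  exists (n : nat) (F : KA) (g : 'I_n -> F),
    ka_free_on g /\ exists e : A -> F, ka_hom e /\ injective e.

Definition ka_projective (P : KA) : Prop :=
  exists (X : Type) (F : KA) (g : X -> F),
    ka_free_on g /\
    exists (i : P -> F) (j : F -> P), ka_hom i /\ ka_hom j /\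
      (forall p, j (i p) = p).

Inductive K4_t := K4_0 | K4_nx | K4_x | K4_1.

Definition K4_rank (a : K4_t) : nat :=
  match a with K4_0 => 0 | K4_nx => 1 | K4_x => 2 | K4_1 => 3 end.
Definition K4_meet (a b : K4_t) := if K4_rank a <= K4_rank b then a else b.
Definition K4_join (a b : K4_t) := if K4_rank a <= K4_rank b then b else a.
Definition K4_neg (a : K4_t) :=
  match a with K4_0 => K4_1 | K4_nx => K4_x | K4_x => K4_nx | K4_1 => K4_0 end.

Definition K4 : KA.
Proof.
refine (@Build_KA K4_t K4_meet K4_join K4_neg K4_0 K4_1 _ _ _ _ _ _ _ _ _ _ _ _);
  intros; repeat match goal with x : K4_t |- _ => destruct x end; reflexivity.
Defined.

Definition Two_KA : KA.
Proof.
refine (@Build_KA bool andb orb negb false true _ _ _ _ _ _ _ _ _ _ _ _);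
  intros; repeat match goal with x : bool |- _ => destruct x end; reflexivity.
Defined.

(* A one-generated Kleene algebra A = <a> is the image of the six-element free
   algebra F6 under evaluation at a.  Subalgebras of free Kleene algebras have
   a homomorphism onto 2, so negation has no fixed point, and, because a free
   algebra is a retract of itself with a new bottom and top adjoined, their
   only elements with x /\ ~x = 0 are 0 and 1.  Hence either a /\ ~a = 0, so
   a is 0 or 1 and A ≅ 2; or a <= ~a or ~a <= a, and A ≅ K4; or evaluation at
   a identifies none of the lower covering pairs of F6 and is injective, so
   A ≅ F6, the free algebra on one generator.  Conversely K4 (with ~x sent to
   z /\ ~z) and 2 are retracts of F(z), which makes all three exact and
   projective. *)

From mathcomp Require Import all_boot.
From Stdlib Require Import Classical ClassicalEpsilon.

Set Implicit Arguments.
Unset Strict Implicit.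
Unset Printing Implicit Defensive.

Section KALattice.
Variable A : KA.
Implicit Types x y w : A.
Local Notation "0" := (ka_zero A).
Local Notation "1" := (ka_one A).

Definition ka_le x y := ka_meet x y = x.

Lemma meetxx x : ka_meet x x = x.
Proof. by rewrite -{2}(ka_join_absorb x x) ka_meet_absorb. Qed.
Lemma joinxx x : ka_join x x = x.
Proof. by rewrite -{2}(ka_meet_absorb x x) ka_join_absorb. Qed.
Lemma meet0x x : ka_meet 0 x = 0.
Proof. by rewrite -{1}(ka_join0 x) ka_joinC ka_meet_absorb. Qed.
Lemma meetx0 x : ka_meet x 0 = 0. Proof. by rewrite ka_meetC meet0x. Qed.
Lemma meet1x x : ka_meet 1 x = x. Proof. by rewrite ka_meetC ka_meet1. Qed.
Lemma join1x x : ka_join 1 x = 1. Proof. by rewrite -{1}(meet1x x) ka_join_absorb. Qed.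

Lemma neg_meet x y : ka_neg (ka_meet x y) = ka_join (ka_neg x) (ka_neg y).
Proof. by rewrite ka_deMorgan ka_negK. Qed.
Lemma neg1 : ka_neg 1 = 0.
Proof. by rewrite -(join1x (ka_neg 0)) -{1}(ka_negK 1) -ka_deMorgan meetx0. Qed.
Lemma neg0 : ka_neg 0 = 1. Proof. by rewrite -neg1 ka_negK. Qed.
Lemma neg_meetN x : ka_neg (ka_meet x (ka_neg x)) = ka_join x (ka_neg x).
Proof. by rewrite neg_meet ka_negK ka_joinC. Qed.
Lemma neg_joinN x : ka_neg (ka_join x (ka_neg x)) = ka_meet x (ka_neg x).
Proof. by rewrite -neg_meetN ka_negK. Qed.

Lemma le_refl x : ka_le x x. Proof. exact: meetxx. Qed.
Lemma le0x x : ka_le 0 x. Proof. exact: meet0x. Qed.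
Lemma lex1 x : ka_le x 1. Proof. exact: ka_meet1. Qed.
Lemma le_meetl x y : ka_le (ka_meet x y) x.
Proof. by rewrite /ka_le ka_meetC ka_meetA meetxx. Qed.
Lemma le_meetr x y : ka_le (ka_meet x y) y.
Proof. by rewrite /ka_le -ka_meetA meetxx. Qed.
Lemma le_joinl x y : ka_le x (ka_join x y). Proof. exact: ka_meet_absorb. Qed.
Lemma le_joinr x y : ka_le y (ka_join x y).
Proof. by rewrite ka_joinC; apply: le_joinl. Qed.
Lemma le_kleene x : ka_le (ka_meet x (ka_neg x)) (ka_join x (ka_neg x)).
Proof. exact: ka_kleene. Qed.
Lemma le_trans y x w : ka_le x y -> ka_le y w -> ka_le x w.
Proof. by rewrite /ka_le => xy yw; rewrite -xy -{2}yw ka_meetA xy. Qed.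

Lemma le_anti x y : ka_le x y -> ka_le y x -> x = y.
Proof. by move=> xy yx; rewrite -xy ka_meetC yx. Qed.

Lemma meet_l x y : ka_le x y -> ka_meet x y = x. Proof. by []. Qed.
Lemma meet_r x y : ka_le y x -> ka_meet x y = y. Proof. by rewrite ka_meetC. Qed.
Lemma join_r x y : ka_le x y -> ka_join x y = y.
Proof. by rewrite /ka_le => <-; rewrite ka_joinC ka_meetC ka_join_absorb. Qed.
Lemma join_l x y : ka_le y x -> ka_join x y = x.
Proof. by rewrite ka_joinC; apply: join_r. Qed.
End KALattice.

Global Hint Resolve le_refl le0x lex1 le_meetl le_meetr le_joinl le_joinr le_kleene : ka_le.

Ltac ka_case :=
  solve [ reflexivity
        | symmetry; first [ apply: ka_meetC | apply: ka_joinC | apply: ka_negK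
                          | apply: neg_meetN | apply: neg_joinN | apply: neg0 | apply: neg1
                          | apply: meet_l; solve [auto with ka_le]
                          | apply: meet_r; solve [auto with ka_le]
                          | apply: join_l; solve [auto with ka_le]
                          | apply: join_r; solve [auto with ka_le] ] ].

Ltac hom_by_cases :=
  refine (conj _ (conj _ (conj _ (conj _ _)))); intros;
  repeat match goal with x : ka_car _ |- _ => destruct x end; simpl; ka_case.

Section Homomorphisms.
Variables A B C : KA.

Lemma hom_id : ka_hom (fun x : A => x). Proof. by do !split. Qed.

Lemma hom_comp (f : A -> B) (g : B -> C) :
  ka_hom f -> ka_hom g -> ka_hom (fun x => g (f x)).
Proof.
move=> [fM [fJ [fN [f0 f1]]]] [gM [gJ [gN [g0 g1]]]].
by do !split; move=> *; rewrite ?fM ?fJ ?fN ?f0 ?f1 ?gM ?gJ ?gN ?g0 ?g1.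
Qed.

Lemma hom_can (f : A -> B) (g : B -> A) :
  ka_hom f -> cancel f g -> cancel g f -> ka_hom g.
Proof.
move=> [fM [fJ [fN [f0 f1]]]] fK gK; have f_inj := can_inj fK.
by do !split; move=> *; apply: f_inj; rewrite ?fM ?fJ ?fN ?f0 ?f1 ?gK.
Qed.

Lemma hom_const_between (f : A -> B) p q c d : ka_hom f -> f p = f q ->
  ka_le p c -> ka_le c d -> ka_le d q -> f c = f d.
Proof.
move=> [fM _] fpq pc cd dq.
have squeeze r : ka_le p r -> ka_le r q -> f r = f p.
  by move=> pr rq; rewrite -rq fM -fpq -fM ka_meetC pr.
by rewrite (squeeze c pc (le_trans cd dq)) (squeeze d (le_trans pc cd) dq).
Qed.

Lemma hom_injective_le (f : A -> B) : ka_hom f ->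
  (forall p q, ka_le p q -> f p = f q -> p = q) -> injective f.
Proof.
move=> hf inj_le p q fpq; have [fM [fJ _]] := hf.
have mMJ : ka_meet p q = ka_join p q.
  apply: inj_le; first exact: le_trans (le_meetl p q) (le_joinl p q).
  by rewrite fM fJ fpq meetxx joinxx.
apply: le_anti.
  by apply: le_trans (le_joinl p q) _; rewrite -mMJ; apply: le_meetr.
by apply: le_trans (le_joinr p q) _; rewrite -mMJ; apply: le_meetl.
Qed.
End Homomorphisms.

Lemma bij_inj_surj (T U : Type) (f : T -> U) :
  injective f -> (forall y, exists x, f x = y) -> bijective f.
Proof.
move=> f_inj f_surj.
pose g y := proj1_sig (constructive_indefinite_description _ (f_surj y)).
have gK : cancel g f by move=> y; rewrite /g; case: constructive_indefinite_description.
by exists g => // x; apply: f_inj; rewrite gK.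
Qed.

Lemma iso_sym (A B : KA) : ka_iso A B -> ka_iso B A.
Proof.
move=> [f [hf [g fK gK]]]; exists g; split; first exact: hom_can hf fK gK.
by exists f.
Qed.

Lemma iso_trans (A B C : KA) : ka_iso A B -> ka_iso B C -> ka_iso A C.
Proof.
move=> [f [hf bf]] [g [hg bg]]; exists (fun x => g (f x)).
by split; [exact: hom_comp | exact: bij_comp].
Qed.

Section Generation.
Variables A B : KA.

Lemma gen_sub (S T : A -> Prop) x :
  (forall y, S y -> T y) -> ka_gen S x -> ka_gen T x.
Proof. by move=> ST; elim=> *; [apply: kg_base; apply: ST | constructor ..]. Qed.

Lemma gen_hom (f : A -> B) (a x : A) :
  ka_hom f -> ka_gen (fun y => y = a) x -> ka_gen (fun y => y = f a) (f x).
Proof.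
move=> [fM [fJ [fN [f0 f1]]]]; elim=> {x} [x ->| x y _ gx _ gy | x y _ gx _ gy | x _ gx | |].
all: rewrite ?fM ?fJ ?fN ?f0 ?f1; by constructor.
Qed.

Lemma gen_hom_image (f : A -> B) (a : A) y :
  ka_hom f -> ka_gen (fun w => w = f a) y -> exists x, f x = y.
Proof.
move=> [fM [fJ [fN [f0 f1]]]].
elim=> {y} [y ->| _ _ _ [x <-] _ [x' <-] | _ _ _ [x <-] _ [x' <-] | _ _ [x <-] | |].
- by exists a.
- by exists (ka_meet x x').
- by exists (ka_join x x').
- by exists (ka_neg x).
- by exists (ka_zero A).
- by exists (ka_one A).
Qed.

Lemma one_generated_surj (f : A -> B) : ka_hom f -> (forall y, exists x, f x = y) ->
  ka_one_generated A -> ka_one_generated B.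
Proof.
move=> hf f_surj [a gen_a]; exists (f a) => y.
by have [x <-] := f_surj y; apply: gen_hom.
Qed.
End Generation.

Lemma iso_of_generator (A B : KA) (f : B -> A) (b : B) : ka_hom f -> injective f ->
  (forall x, ka_gen (fun y => y = f b) x) -> ka_iso A B.
Proof.
move=> hf f_inj gen_fb; apply: iso_sym; exists f; split => //.
by apply: bij_inj_surj => // x; apply: gen_hom_image hf (gen_fb x).
Qed.

Lemma iso_one_generated (A B : KA) :
  ka_iso A B -> ka_one_generated B -> ka_one_generated A.
Proof.
move=> /iso_sym [f [hf [g fK gK]]]; apply: one_generated_surj hf _.
by move=> x; exists (g x).
Qed.

Lemma one_generated_fin_generated (A : KA) : ka_one_generated A -> ka_fin_generated A.
Proof.
move=> [a gen_a]; exists [:: a] => x.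
by apply: gen_sub (gen_a x) => y ->; left.
Qed.

Inductive F6_t := F6_0 | F6_m | F6_z | F6_nz | F6_M | F6_1.

(* F6 is realised inside K4 x K4 (elements coded by their ranks) with z = (x, ~x);
   the codes form a sublattice, so meet and join are computed coordinatewise
   and the default branch of F6_decode is never reached. *)
Definition F6_code (p : F6_t) : nat * nat :=
  match p with
  | F6_0 => (0, 0) | F6_m => (1, 1) | F6_z => (2, 1)
  | F6_nz => (1, 2) | F6_M => (2, 2) | F6_1 => (3, 3)
  end.
Definition F6_decode (c : nat * nat) : F6_t :=
  match c with
  | (1, 1) => F6_m | (2, 1) => F6_z | (1, 2) => F6_nz
  | (2, 2) => F6_M | (3, 3) => F6_1 | _ => F6_0
  end.
Definition F6_meet (p q : F6_t) :=
  F6_decode (minn (F6_code p).1 (F6_code q).1, minn (F6_code p).2 (F6_code q).2).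
Definition F6_join (p q : F6_t) :=
  F6_decode (maxn (F6_code p).1 (F6_code q).1, maxn (F6_code p).2 (F6_code q).2).
Definition F6_neg (p : F6_t) :=
  match p with
  | F6_0 => F6_1 | F6_m => F6_M | F6_z => F6_nz
  | F6_nz => F6_z | F6_M => F6_m | F6_1 => F6_0
  end.

Definition F6 : KA.
Proof.
refine (@Build_KA F6_t F6_meet F6_join F6_neg F6_0 F6_1 _ _ _ _ _ _ _ _ _ _ _ _);
  intros; repeat match goal with x : F6_t |- _ => destruct x end; reflexivity.
Defined.

Definition F6_eval (A : KA) (a : A) (p : F6) : A :=
  match p with
  | F6_0 => ka_zero A | F6_m => ka_meet a (ka_neg a) | F6_z => a
  | F6_nz => ka_neg a | F6_M => ka_join a (ka_neg a) | F6_1 => ka_one A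
  end.

Lemma F6_eval_hom (A : KA) (a : A) : ka_hom (F6_eval a).
Proof. hom_by_cases. Qed.

Lemma hom_F6_eval (A B : KA) (f : A -> B) (a : A) p :
  ka_hom f -> f (F6_eval a p) = F6_eval (f a) p.
Proof. by move=> [fM [fJ [fN [f0 f1]]]]; case: p => /=; rewrite ?fM ?fJ ?fN ?f0 ?f1. Qed.

Lemma F6_eval_z (p : F6) : F6_eval (F6_z : F6) p = p.
Proof. by case: p. Qed.

Lemma F6_free : ka_free_on (fun _ : unit => F6_z : F6).
Proof.
move=> B b; exists (F6_eval (b tt)); split; first exact: F6_eval_hom.
split=> [[] //|f hf fz p].
by rewrite -{1}[p]F6_eval_z (hom_F6_eval _ _ hf) (fz tt).
Qed.

Lemma F6_eval_gen (A : KA) (a : A) p : ka_gen (fun y => y = a) (F6_eval a p).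
Proof.
have gen_a : ka_gen (fun y => y = a) a by constructor.
case: p => /=; [exact: kg_zero | exact: kg_meet gen_a (kg_neg gen_a) | exact: gen_a
               | exact: kg_neg gen_a | exact: kg_join gen_a (kg_neg gen_a) | exact: kg_one].
Qed.

Lemma F6_one_generated : ka_one_generated F6.
Proof. by exists F6_z => p; have := F6_eval_gen (F6_z : F6) p; rewrite F6_eval_z. Qed.

Definition K4_eval (A : KA) (u : A) (k : K4) : A :=
  match k with K4_0 => ka_zero A | K4_nx => u | K4_x => ka_neg u | K4_1 => ka_one A end.

Lemma K4_eval_hom (A : KA) (u : A) : ka_le u (ka_neg u) -> ka_hom (K4_eval u).
Proof. move=> le_u; hom_by_cases. Qed.

Definition Two_eval (A : KA) (b : Two_KA) : A := if b then ka_one A else ka_zero A.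

Lemma Two_eval_hom (A : KA) : ka_hom (Two_eval A).
Proof. hom_by_cases. Qed.

Lemma Two_eval_retract (A : KA) (j : A -> Two_KA) : ka_hom j -> cancel (Two_eval A) j.
Proof. by move=> [_ [_ [_ [j0 j1]]]] []. Qed.

Lemma hom_neq_neg (A B : KA) (f : A -> B) (c d : A) : ka_hom f ->
  f c <> f d -> f (ka_neg d) <> f (ka_neg c).
Proof.
by move=> [_ [_ [fN _]]] fcd; rewrite !fN => /(congr1 (@ka_neg B)); rewrite !ka_negK => /esym.
Qed.

Lemma F6_hom_injective (A : KA) (f : F6 -> A) : ka_hom f ->
  f F6_0 <> f F6_m -> f F6_m <> f F6_z -> f F6_m <> f F6_nz -> injective f.
Proof.
move=> hf ne_0m ne_mz ne_mnz.
have /= ne_M1 := hom_neq_neg hf ne_0m.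
have /= ne_nzM := hom_neq_neg hf ne_mz.
have /= ne_zM := hom_neq_neg hf ne_mnz.
apply: (hom_injective_le hf) => p q le_pq fpq.
(* f is constant on [p, q], so it identifies one of the six covering pairs. *)
have cover := hom_const_between hf fpq.
case: p q le_pq {fpq} cover => [] [] //= _ cover; exfalso.
all: first [ by apply: ne_0m; apply: cover | by apply: ne_mz; apply: cover
           | by apply: ne_mnz; apply: cover | by apply: ne_M1; apply: cover
           | by apply: ne_nzM; apply: cover | by apply: ne_zM; apply: cover ].
Qed.

Lemma K4_hom_injective (A : KA) (f : K4 -> A) : ka_hom f ->
  f K4_0 <> f K4_nx -> f K4_nx <> f K4_x -> injective f.
Proof.
move=> hf ne_0nx ne_nxx; have /= ne_x1 := hom_neq_neg hf ne_0nx.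
apply: (hom_injective_le hf) => p q le_pq fpq.
have cover := hom_const_between hf fpq.
case: p q le_pq {fpq} cover => [] [] //= _ cover; exfalso.
all: first [ by apply: ne_0nx; apply: cover | by apply: ne_nxx; apply: cover
           | by apply: ne_x1; apply: cover ].
Qed.

Lemma Two_eval_injective (A : KA) : ka_zero A <> ka_one A -> injective (Two_eval A).
Proof. by move=> ne01 [] [] // /esym. Qed.

Section Lift.
Variable B : KA.

Inductive lift_t := LBot | LMid of B | LTop.

Definition lift_meet (x y : lift_t) :=
  match x, y with
  | LBot, _ | _, LBot => LBot
  | LTop, y => y
  | x, LTop => x
  | LMid a, LMid b => LMid (ka_meet a b)
  end.
Definition lift_join (x y : lift_t) :=
  match x, y with
  | LTop, _ | _, LTop => LTop
  | LBot, y => y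
  | x, LBot => x
  | LMid a, LMid b => LMid (ka_join a b)
  end.
Definition lift_neg (x : lift_t) :=
  match x with LBot => LTop | LTop => LBot | LMid a => LMid (ka_neg a) end.

Ltac ka_axiom := first [ apply: ka_meetC | apply: ka_joinC | apply: ka_meetA | apply: ka_joinA
  | apply: ka_meet_absorb | apply: ka_join_absorb | apply: ka_distr
  | apply: ka_deMorgan | apply: ka_kleene | apply: meetxx | apply: joinxx ].

Definition lift : KA.
Proof.
refine (@Build_KA lift_t lift_meet lift_join lift_neg LBot LTop _ _ _ _ _ _ _ _ _ _ _ _).
all: intros; repeat match goal with x : lift_t |- _ => destruct x end; simpl.
all: rewrite ?ka_negK; try reflexivity.
all: f_equal; first [ ka_axiom | symmetry; ka_axiom | symmetry; rewrite ka_joinC; ka_axiom ].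
Defined.

Definition lift_proj (x : lift) : B :=
  match x with LBot => ka_zero B | LTop => ka_one B | LMid b => b end.

Lemma lift_proj_hom : ka_hom lift_proj.
Proof. hom_by_cases. Qed.
End Lift.
Arguments LMid {B}.

Section FreeAlgebra.
Variables (X : Type) (F : KA) (g : X -> F).
Hypothesis free_g : ka_free_on g.

Lemma free_hom_unique (B : KA) (f1 f2 : F -> B) : ka_hom f1 -> ka_hom f2 ->
  (forall x, f1 (g x) = f2 (g x)) -> forall a, f1 a = f2 a.
Proof.
move=> h1 h2 E a; have [f [_ [_ f_uniq]]] := free_g (fun x => f1 (g x)).
by rewrite (f_uniq f1 h1 (fun x => erefl)) (f_uniq f2 h2 (fun x => esym (E x))).
Qed.

Lemma free_sub_neg_neq (A : KA) (e : A -> F) : ka_hom e -> forall x : A, x <> ka_neg x.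
Proof.
move=> he x x_neg; have [t [ht _]] := free_g (fun _ => true : Two_KA).
have [_ [_ [tN _]]] := hom_comp he ht.
by have := tN x; rewrite -x_neg; case: (t (e x)).
Qed.

(* The identity of F factors through the lift of F sending each generator to the
   middle; an element with x /\ ~x = 0 cannot land in the middle, which contains
   no bottom. *)
Lemma free_boolean (x : F) : ka_meet x (ka_neg x) = ka_zero F ->
  x = ka_zero F \/ x = ka_one F.
Proof.
move=> x_bool; have [psi [hpsi [psi_g _]]] := free_g (fun i => LMid (g i) : lift F).
have psiK : forall a, lift_proj (psi a) = a.
  apply: (free_hom_unique (hom_comp hpsi (lift_proj_hom F)) (hom_id F)) => i.
  by rewrite /= psi_g.
have [psiM [_ [psiN [psi0 _]]]] := hpsi.
rewrite -(psiK x); move: (congr1 psi x_bool); rewrite psiM psiN psi0.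
by case: (psi x) => [|b|] //= _; [left | right].
Qed.

Lemma free_sub_boolean (A : KA) (e : A -> F) : ka_hom e -> injective e ->
  forall x : A, ka_meet x (ka_neg x) = ka_zero A -> x = ka_zero A \/ x = ka_one A.
Proof.
move=> he e_inj x x_bool; have [eM [_ [eN [e0 e1]]]] := he.
have : e x = ka_zero F \/ e x = ka_one F by apply: free_boolean; rewrite -eN -eM x_bool.
by rewrite -e0 -e1; case=> /e_inj; [left | right].
Qed.
End FreeAlgebra.

Lemma free_iso (X : Type) (F G : KA) (g : X -> F) (h : X -> G) :
  ka_free_on g -> ka_free_on h -> ka_iso F G.
Proof.
move=> free_g free_h.
have [f [hf [fg _]]] := free_g G h; have [k [hk [kh _]]] := free_h F g.
exists f; split=> //; exists k.
  by apply: (free_hom_unique free_g (hom_comp hf hk) (hom_id F)) => x /=; rewrite fg kh.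
by apply: (free_hom_unique free_h (hom_comp hk hf) (hom_id G)) => x /=; rewrite kh fg.
Qed.

Lemma one_generated_classification (A : KA) (a : A) :
  (forall x, ka_gen (fun y => y = a) x) ->
  (forall x : A, x <> ka_neg x) ->
  (forall x : A, ka_meet x (ka_neg x) = ka_zero A -> x = ka_zero A \/ x = ka_one A) ->
  ka_iso A F6 \/ ka_iso A K4 \/ ka_iso A Two_KA.
Proof.
move=> gen_a neg_neq boolean.
have [m0|m_ne0] := classic (ka_meet a (ka_neg a) = ka_zero A).
  have ne01 : ka_zero A <> ka_one A by move=> E; apply: (neg_neq (ka_zero A)); rewrite neg0.
  have [b a_b] : exists b, Two_eval A b = a.
    by case: (boolean a m0) => ->; [exists false | exists true].
  rewrite -a_b in gen_a; right; right.
  exact: iso_of_generator (Two_eval_hom A) (Two_eval_injective ne01) gen_a.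
have a_ne0 : ka_zero A <> a by move=> a0; apply: m_ne0; rewrite -a0 meet0x.
have na_ne0 : ka_zero A <> ka_neg a by move=> na0; apply: m_ne0; rewrite -na0 meetx0.
have [m_a|m_nea] := classic (ka_meet a (ka_neg a) = a).
  have hK4 := K4_eval_hom m_a.
  right; left; apply: (@iso_of_generator _ K4 _ K4_nx hK4) => //.
  exact: K4_hom_injective hK4 a_ne0 (neg_neq a).
have [m_na|m_nena] := classic (ka_meet a (ka_neg a) = ka_neg a).
  have le_na : ka_le (ka_neg a) (ka_neg (ka_neg a)) by rewrite /ka_le ka_negK ka_meetC.
  have hK4 := K4_eval_hom le_na.
  right; left; apply: (@iso_of_generator _ K4 _ K4_x hK4); last by rewrite /= ka_negK.
  exact: K4_hom_injective hK4 na_ne0 (neg_neq (ka_neg a)).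
left; apply: (@iso_of_generator _ F6 _ F6_z (F6_eval_hom a)) => //.
exact: F6_hom_injective (F6_eval_hom a) (nesym m_ne0) m_nea m_nena.
Qed.

Definition ka_retract (P F : KA) : Prop :=
  exists (i : P -> F) (j : F -> P), ka_hom i /\ ka_hom j /\ cancel i j.

Lemma retract_refl (F : KA) : ka_retract F F.
Proof. by exists id, id; split; [|split]; first [exact: hom_id | by []]. Qed.

Lemma retract_projective (X : Type) (P F : KA) (g : X -> F) :
  ka_free_on g -> ka_retract P F -> ka_projective P.
Proof. by move=> free_g retr; exists X, F, g. Qed.

Lemma retract_one_generated (P F : KA) :
  ka_retract P F -> ka_one_generated F -> ka_one_generated P.
Proof. by move=> [i [j [_ [hj iK]]]]; apply: one_generated_surj hj _ => p; exists (i p). Qed.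

Lemma Two_retract (F : KA) (t : F -> Two_KA) : ka_hom t -> ka_retract Two_KA F.
Proof.
move=> ht; exists (Two_eval F), t.
by split; [exact: Two_eval_hom | split=> //; exact: Two_eval_retract].
Qed.

Lemma K4_retract_free1 (F : KA) (z : F) :
  ka_free_on (fun _ : unit => z) -> ka_retract K4 F.
Proof.
move=> free_z; have [j [hj [jz _]]] := free_z K4 (fun _ => K4_x).
have le_m : ka_le (ka_meet z (ka_neg z)) (ka_neg (ka_meet z (ka_neg z))).
  by rewrite neg_meetN; apply: le_kleene.
exists (K4_eval (ka_meet z (ka_neg z))), j; split; first exact: K4_eval_hom.
split=> //; have [jM [_ [jN [j0 j1]]]] := hj.
by case=> /=; rewrite ?(jM, jN, j0, j1, jz tt).
Qed.

Lemma free_unit_ord1 (F : KA) (z : F) :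
  ka_free_on (fun _ : unit => z) -> ka_free_on (fun _ : 'I_1 => z).
Proof.
move=> free_z B h; have [f [hf [fz f_uniq]]] := free_z B (fun _ => h ord0).
exists f; split=> //; split=> [i|f' hf' f'z]; first by rewrite (ord1 i) fz.
by apply: f_uniq => // _; apply: f'z.
Qed.

Lemma iso_retract_exact (A P F : KA) (z : F) :
  ka_free_on (fun _ : 'I_1 => z) -> ka_one_generated F ->
  ka_iso A P -> ka_retract P F -> ka_one_generated A /\ ka_exact A.
Proof.
move=> free_z gen_F A_P retr.
have gen_A := iso_one_generated A_P (retract_one_generated retr gen_F).
split=> //; split; first exact: one_generated_fin_generated.
have [f [hf [f' fK _]]] := A_P; have [i [j [hi [_ iK]]]] := retr.
exists 1, F, (fun _ => z); split=> //; exists (fun x => i (f x)).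
by split; [exact: hom_comp | exact: inj_comp (can_inj iK) (can_inj fK)].
Qed.

Theorem proposition5p5 (F : KA) (z : F) :
  ka_free_on (fun _ : unit => z) ->
  (forall A : KA,
     (ka_one_generated A /\ ka_exact A) <->
     (ka_iso A F \/ ka_iso A K4 \/ ka_iso A Two_KA)) /\
  ka_projective F /\ ka_projective K4 /\ ka_projective Two_KA.
Proof.
move=> free_z.
have F_F6 : ka_iso F F6 := free_iso free_z F6_free.
have gen_F : ka_one_generated F := iso_one_generated F_F6 F6_one_generated.
have [t [ht _]] := free_z Two_KA (fun _ => true).
have retr_F := retract_refl F; have retr_K4 := K4_retract_free1 free_z.
have retr_Two := Two_retract ht.
split; last by split; [|split]; apply: retract_projective free_z _.
move=> A; split.
- case=> [[a gen_a] [_ [n [Fn [g [free_g [e [he e_inj]]]]]]]].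
  have [A_F6|A_K4_Two] := one_generated_classification gen_a
    (free_sub_neg_neq free_g he) (free_sub_boolean free_g he e_inj).
    by left; apply: iso_trans A_F6 (iso_sym F_F6).
  by right.
- by case=> [A_P|[A_P|A_P]]; apply: iso_retract_exact (free_unit_ord1 free_z) gen_F A_P _.
Qed.
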